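(* Let $G$ be a closed and continuous metric cyclic graph whose vertex set $V$ is homeomorphic to $S^1$, and let $u\in V$. Then the map $[0,\gamma_V(u)]\to V$, $r\mapsto g_r(u)$, is continuous.
   Context: Identify $S^1$ with $[0,1)$; $d_{S^1}(x,y)\in[0,1)$ is the normalized counterclockwise distance from $x$ to $y$, and $[x,y]_V$ denotes the set of points of $V$ on the closed counterclockwise arc from $x$ to $y$. A directed graph $G=(V,E)$ (no loops, no opposite edges) with $V\subseteq S^1$ is cyclic if whenever $u_0\to u_1$, every $w\in V$ strictly counterclockwise-between $u_0$ and $u_1$ has $u_0\to w$ and $w\to u_1$. Define $\gamma_m(u_0)=\sup\{\sum_{i=0}^{m-1}d_{S^1}(u_i,u_{i+1}):u_0\to\cdots\to u_m\text{ in }G\}$ and $f_1(u)=u+\gamma_1(u)\bmod1$. $G$ is closed if $V$ is closed in $S^1$ (then $f_1(u)\in V$), and continuous if every $\gamma_m$ is continuous. $G$ is metric if $V$ carries a metric $d_V$ inducing the subspace topology from $S^1$ such that $d_V(u_0,u_1)<d_V(u_0,u_2)$ for every directed path $u_0\to u_1\to u_2$. Set $\gamma_V(u)=d_V(u,f_1(u))$. For $r\in[0,\gamma_V(u)]$, $g_r(u)$ is the unique point $w\in[u,f_1(u)]_V$ with $d_V(u,w)=r$. *)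

From Stdlib Require Import Reals ClassicalEpsilon.
From Coquelicot Require Import Coquelicot.
Open Scope R_scope.

(* S^1 identified with [0,1). *)
Definition S1 (x : R) : Prop := 0 <= x < 1.

(* normalized counterclockwise distance from x to y, in [0,1) *)
Definition dS (x y : R) : R := frac_part (y - x).

(* the usual (geodesic) metric of S^1, inducing its topology *)
Definition dc (x y : R) : R := Rmin (dS x y) (dS y x).

Definition digraph (V : R -> Prop) (E : R -> R -> Prop) : Prop :=
  (forall x, V x -> S1 x) /\
  (forall x y, E x y -> V x /\ V y) /\
  (forall x, ~ E x x) /\
  (forall x y, E x y -> ~ E y x).

Definition strictly_between (u0 w u1 : R) : Prop :=
  0 < dS u0 w /\ dS u0 w < dS u0 u1.

Definition cyclic (V : R -> Prop) (E : R -> R -> Prop) : Prop :=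
  forall u0 u1, E u0 u1 ->
    forall w, V w -> strictly_between u0 w u1 -> E u0 w /\ E w u1.

Definition is_path (E : R -> R -> Prop) (p : nat -> R) (m : nat) : Prop :=
  forall i, (i < m)%nat -> E (p i) (p (S i)).

Fixpoint path_len (p : nat -> R) (m : nat) : R :=
  match m with
  | O => 0
  | S k => path_len p k + dS (p k) (p (S k))
  end.

Definition gamma (E : R -> R -> Prop) (m : nat) (u0 : R) : R :=
  real (Lub_Rbar (fun s => exists p, p O = u0 /\ is_path E p m /\ s = path_len p m)).

Definition f1 (E : R -> R -> Prop) (u : R) : R := frac_part (u + gamma E 1 u).

Definition closed_in_S1 (V : R -> Prop) : Prop :=
  forall x, S1 x -> (forall d, 0 < d -> exists v, V v /\ dc x v < d) -> V x.

Definition cont_on_V (V : R -> Prop) (h : R -> R) : Prop :=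
  forall u, V u -> forall eps, 0 < eps -> exists del, 0 < del /\
    forall v, V v -> dc u v < del -> Rabs (h v - h u) < eps.

Definition continuous_graph (E : R -> R -> Prop) (V : R -> Prop) : Prop :=
  forall m, cont_on_V V (gamma E m).

Definition cont_S1 (A B : R -> Prop) (phi : R -> R) : Prop :=
  (forall x, A x -> B (phi x)) /\
  forall x, A x -> forall eps, 0 < eps -> exists del, 0 < del /\
    forall y, A y -> dc x y < del -> dc (phi x) (phi y) < eps.

Definition homeomorphic_to_S1 (V : R -> Prop) : Prop :=
  exists phi psi : R -> R,
    cont_S1 S1 V phi /\ cont_S1 V S1 psi /\
    (forall x, S1 x -> psi (phi x) = x) /\
    (forall v, V v -> phi (psi v) = v).

Definition metric_on (V : R -> Prop) (dV : R -> R -> R) : Prop :=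
  (forall x y, V x -> V y -> 0 <= dV x y) /\
  (forall x y, V x -> V y -> (dV x y = 0 <-> x = y)) /\
  (forall x y, V x -> V y -> dV x y = dV y x) /\
  (forall x y z, V x -> V y -> V z -> dV x z <= dV x y + dV y z).

Definition induces_subspace_topology (V : R -> Prop) (dV : R -> R -> R) : Prop :=
  (forall u, V u -> forall eps, 0 < eps -> exists del, 0 < del /\
     forall v, V v -> dc u v < del -> dV u v < eps) /\
  (forall u, V u -> forall eps, 0 < eps -> exists del, 0 < del /\
     forall v, V v -> dV u v < del -> dc u v < eps).

Definition metric_graph (V : R -> Prop) (E : R -> R -> Prop) (dV : R -> R -> R) : Prop :=
  metric_on V dV /\ induces_subspace_topology V dV /\
  (forall u0 u1 u2, E u0 u1 -> E u1 u2 -> dV u0 u1 < dV u0 u2).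

Definition gammaV (E : R -> R -> Prop) (dV : R -> R -> R) (u : R) : R :=
  dV u (f1 E u).

(* [x,y]_V : points of V on the closed counterclockwise arc from x to y *)
Definition arcV (V : R -> Prop) (x y w : R) : Prop := V w /\ dS x w <= dS x y.

(* g_r(u): the (unique) w in [u, f1 u]_V with dV u w = r (definite description) *)
Definition g (V : R -> Prop) (E : R -> R -> Prop) (dV : R -> R -> R) (r u : R) : R :=
  epsilon (inhabits 0) (fun w => arcV V u (f1 E u) w /\ dV u w = r).

From Stdlib Require Import Reals Lra Lia ClassicalEpsilon Classical.
From Coquelicot Require Import Coquelicot.
Open Scope R_scope.

(* A continuous injection [phi] of the circle into itself is onto: if it missed
   [x0], then [F t := dS x0 (phi t)] would be a continuous injective real function
   on the circle, yet [t |-> F t - F (t + 1/2)] changes sign on [0, 1/2] and so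
   vanishes somewhere.  Hence [V] is the whole circle, and the arc [[u, f1 u]_V]
   is parametrised by [t |-> u + t], [0 <= t <= gamma_1 u].  Along it
   [h t := dV u (u + t)] is continuous, and strictly increasing: two points of the
   arc below [gamma_1 u] lie, by cyclicity, on a path [u -> w1 -> w2], and the
   metric condition gives [dV u w1 < dV u w2].  So [g_r u = u + h^-1 r], and the
   inverse of a continuous strictly increasing function is continuous. *)

Lemma frac_part_eq z w (n : Z) : 0 <= w < 1 -> z = IZR n + w -> frac_part z = w.
Proof. intros Hw Hz. symmetry. exact (proj2 (Int_part_frac_part_spec z n w Hw Hz)). Qed.

Lemma frac_part_bounds z : 0 <= frac_part z < 1.
Proof. destruct (base_fp z). lra. Qed.

Lemma frac_part_id x : 0 <= x < 1 -> frac_part x = x.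
Proof. intros. apply frac_part_eq with 0%Z; simpl; lra. Qed.

Lemma frac_part_plus_IZR z n : frac_part (z + IZR n) = frac_part z.
Proof.
  apply frac_part_eq with (Int_part z + n)%Z; [apply frac_part_bounds|].
  rewrite plus_IZR, (Rplus_Int_part_frac_part z) at 1. ring.
Qed.

Lemma frac_part_minus a b : frac_part (frac_part b - frac_part a) = frac_part (b - a).
Proof.
  replace (frac_part b - frac_part a) with ((b - a) + IZR (Int_part a - Int_part b)).
  - apply frac_part_plus_IZR.
  - rewrite minus_IZR, (Rplus_Int_part_frac_part a) at 1.
    rewrite (Rplus_Int_part_frac_part b) at 1. ring.
Qed.

Lemma frac_part_le z : 0 <= z -> frac_part z <= z.
Proof.
  intros. destruct (Rlt_dec z 1).
  - rewrite frac_part_id; lra.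
  - destruct (frac_part_bounds z); lra.
Qed.

Lemma S1_frac_part z : S1 (frac_part z).
Proof. apply frac_part_bounds. Qed.

Lemma dS_S1 x y : S1 x -> S1 y -> dS x y = if Rle_dec x y then y - x else y - x + 1.
Proof.
  unfold S1, dS; intros. destruct Rle_dec.
  - apply frac_part_id; lra.
  - apply frac_part_eq with (-1)%Z; simpl; lra.
Qed.

Lemma dS_pos x y : S1 x -> S1 y -> x <> y -> 0 < dS x y.
Proof. intros Hx Hy. rewrite dS_S1 by auto. unfold S1 in *. destruct Rle_dec; intros; lra. Qed.

Lemma dS_inj x a b : S1 x -> S1 a -> S1 b -> dS x a = dS x b -> a = b.
Proof.
  intros Hx Ha Hb. rewrite !dS_S1 by auto. unfold S1 in *.
  destruct Rle_dec; destruct Rle_dec; lra.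
Qed.

(* The bound on [dc a b] keeps [a] and [b] on the same side of [x0], where [dS x0] jumps. *)
Lemma dS_dc_lipschitz x0 a b : S1 x0 -> S1 a -> S1 b ->
  dc a b < Rmin (dS x0 a) (1 - dS x0 a) -> Rabs (dS x0 b - dS x0 a) <= dc a b.
Proof.
  intros H0 Ha Hb. unfold dc. rewrite !dS_S1 by auto. unfold S1 in *.
  repeat destruct Rle_dec; unfold Rmin; repeat destruct Rle_dec;
    unfold Rabs; repeat destruct Rcase_abs; lra.
Qed.

Lemma dc_frac_part a b : dc (frac_part a) (frac_part b) <= Rabs (b - a).
Proof.
  unfold dc, dS. rewrite !frac_part_minus. destruct (Rle_dec a b).
  - rewrite Rabs_right by lra. eapply Rle_trans; [apply Rmin_l|]. apply frac_part_le; lra.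
  - rewrite Rabs_left by lra. eapply Rle_trans; [apply Rmin_r|].
    replace (- (b - a)) with (a - b) by ring. apply frac_part_le; lra.
Qed.

Lemma dc_refl x : dc x x = 0.
Proof. unfold dc, dS. rewrite Rminus_diag, frac_part_id by lra. apply Rmin_left. lra. Qed.

Lemma continuity_pt_intro f x :
  (forall eps, 0 < eps -> exists del, 0 < del /\
     forall y, Rabs (y - x) < del -> Rabs (f y - f x) < eps) ->
  continuity_pt f x.
Proof.
  intros H eps Heps. destruct (H eps Heps) as [d [Hd Hf]].
  exists d. split; [exact Hd|]. intros y [_ Hy]. exact (Hf y Hy).
Qed.

Lemma lift_continuous phi x0 c : S1 x0 -> cont_S1 S1 S1 phi ->
  (forall x, S1 x -> phi x <> x0) ->
  continuity (fun t => dS x0 (phi (frac_part (t + c)))).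
Proof.
  intros Hx0 [Hphi Hcont] Hmiss t. apply continuity_pt_intro. intros eps Heps.
  set (x := frac_part (t + c)).
  assert (Hx : S1 x) by apply S1_frac_part.
  assert (Hp : 0 < dS x0 (phi x)) by (apply dS_pos; auto; apply not_eq_sym, Hmiss, Hx).
  assert (Hp1 : dS x0 (phi x) < 1) by apply frac_part_bounds.
  destruct (Hcont x Hx (Rmin eps (Rmin (dS x0 (phi x)) (1 - dS x0 (phi x))))) as [del [Hdel Hc]].
  { repeat apply Rmin_pos; lra. }
  exists del. split; [exact Hdel|]. intros y Hy.
  assert (Hxy : dc x (frac_part (y + c)) < del).
  { eapply Rle_lt_trans; [apply dc_frac_part|]. now replace (y + c - (t + c)) with (y - t) by ring. }
  specialize (Hc _ (S1_frac_part _) Hxy).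
  eapply Rle_lt_trans.
  - apply dS_dc_lipschitz; [exact Hx0 | apply Hphi, Hx | apply Hphi, S1_frac_part |].
    eapply Rlt_le_trans; [apply Hc | apply Rmin_r].
  - eapply Rlt_le_trans; [apply Hc | apply Rmin_l].
Qed.

Lemma S1_injection_onto phi : cont_S1 S1 S1 phi ->
  (forall x y, S1 x -> S1 y -> phi x = phi y -> x = y) ->
  forall y, S1 y -> exists x, S1 x /\ phi x = y.
Proof.
  intros Hphi Hinj x0 Hx0. apply NNPP. intro Hmiss.
  assert (Hne : forall x, S1 x -> phi x <> x0) by (intros x Hx Heq; apply Hmiss; now exists x).
  set (F := fun c t => dS x0 (phi (frac_part (t + c)))).
  set (k := fun t => F 0 t - F (/2) t).
  assert (Hk : continuity k).
  { intro t. apply continuity_pt_minus; apply lift_continuous; auto. }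
  assert (Hhalf : frac_part (/2) = /2) by (apply frac_part_id; lra).
  assert (Hk0 : k 0 = F 0 0 - F 0 (/2)).
  { unfold k, F. now rewrite !Rplus_0_l, Rplus_0_r. }
  assert (Hk1 : k (/2) = - k 0).
  { rewrite Hk0. unfold k, F. rewrite !Rplus_0_l, Rplus_0_r.
    replace (/2 + /2) with (0 + IZR 1) by (simpl; lra).
    rewrite frac_part_plus_IZR. ring. }
  destruct (IVT_gen k 0 (/2) 0 Hk) as [t [_ Hkt]].
  { rewrite Hk1. unfold Rmin, Rmax. repeat destruct Rle_dec; lra. }
  unfold k, F in Hkt. rewrite Rplus_0_r in Hkt.
  assert (Himg : forall z, S1 (phi (frac_part z))) by (intro; apply Hphi, S1_frac_part).
  apply Rminus_diag_uniq, dS_inj, Hinj in Hkt; auto using S1_frac_part.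
  assert (Hzero : frac_part (/2) = 0).
  { replace (/2) with ((t + /2) - t) by ring.
    now rewrite <- frac_part_minus, Hkt, Rminus_diag, frac_part_id by lra. }
  lra.
Qed.

Lemma homeomorphic_to_S1_full V : (forall x, V x -> S1 x) -> homeomorphic_to_S1 V ->
  forall x, V x <-> S1 x.
Proof.
  intros HVS [phi [psi [[Hphi Hcont] [_ [Hpsi _]]]]] y. split; [apply HVS|]. intros Hy.
  destruct (S1_injection_onto phi) with y as [x [Hx <-]]; auto.
  - split; auto.
  - intros x1 x2 Hx1 Hx2 Heq. now rewrite <- (Hpsi x1), <- (Hpsi x2), Heq.
Qed.

Lemma Lub_Rbar_unit_interval (S : R -> Prop) : (forall s, S s -> 0 <= s < 1) ->
  0 <= real (Lub_Rbar S) <= 1 /\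
  (forall t, 0 <= t < real (Lub_Rbar S) -> exists s, S s /\ t < s).
Proof.
  intros HS. destruct (Lub_Rbar_correct S) as [Hub Hlub].
  assert (H1 : Rbar_le (Lub_Rbar S) 1).
  { apply Hlub. intros s Hs. simpl. specialize (HS s Hs). lra. }
  destruct (Lub_Rbar S) as [l | | ]; simpl in *; [| contradiction | split; intros; lra].
  split; [split; [|exact H1]|].
  - destruct (Rle_dec 0 l) as [|Hl]; [assumption|]. exfalso.
    apply (Hlub m_infty). intros s Hs. specialize (Hub s Hs). specialize (HS s Hs).
    simpl in Hub. lra.
  - intros t Ht. apply NNPP. intro Hn.
    assert (Ht_ub : l <= t).
    { apply (Hlub t). intros s Hs. simpl. apply Rnot_lt_le. intro Hts. apply Hn. now exists s. }
    lra.
Qed.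

Lemma path1_length_dS E u s : (exists p, p O = u /\ is_path E p 1 /\ s = path_len p 1) ->
  exists v, E u v /\ s = dS u v.
Proof.
  intros [p [H0 [Hp ->]]]. exists (p 1%nat). split.
  - rewrite <- H0. apply Hp. lia.
  - simpl. rewrite H0. ring.
Qed.

Lemma gamma1_bounds E u : 0 <= gamma E 1 u <= 1.
Proof.
  eapply proj1, Lub_Rbar_unit_interval. intros s Hs.
  destruct (path1_length_dS E u s Hs) as [v [_ ->]]. apply frac_part_bounds.
Qed.

Lemma gamma1_approx E u t : 0 <= t < gamma E 1 u -> exists v, E u v /\ t < dS u v.
Proof.
  intros Ht. destruct (Lub_Rbar_unit_interval
    (fun s => exists p, p O = u /\ is_path E p 1 /\ s = path_len p 1)) as [_ Happrox].
  { intros s Hs. destruct (path1_length_dS E u s Hs) as [v [_ ->]]. apply frac_part_bounds. }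
  destruct (Happrox t Ht) as [s [Hs Hts]].
  destruct (path1_length_dS E u s Hs) as [v [Hv ->]]. now exists v.
Qed.

Definition arc_point (u t : R) : R := frac_part (u + t).

Lemma S1_arc_point u t : S1 (arc_point u t).
Proof. apply S1_frac_part. Qed.

Lemma arc_point_0 u : S1 u -> arc_point u 0 = u.
Proof. intros Hu. unfold arc_point. rewrite Rplus_0_r. now apply frac_part_id. Qed.

Lemma dS_arc_points u t1 t2 : 0 <= t1 <= t2 -> t2 < 1 ->
  dS (arc_point u t1) (arc_point u t2) = t2 - t1.
Proof.
  intros. unfold dS, arc_point. rewrite frac_part_minus.
  replace (u + t2 - (u + t1)) with (t2 - t1) by ring. apply frac_part_id. lra.
Qed.

Lemma dS_arc_point u t : S1 u -> 0 <= t < 1 -> dS u (arc_point u t) = t.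
Proof.
  intros Hu Ht. rewrite <- (arc_point_0 u Hu) at 1. rewrite dS_arc_points; lra.
Qed.

Lemma arc_point_dS u v : S1 v -> arc_point u (dS u v) = v.
Proof.
  intros Hv. unfold arc_point, dS.
  replace (u + frac_part (v - u)) with (v + IZR (- Int_part (v - u))).
  - rewrite frac_part_plus_IZR. now apply frac_part_id.
  - pose proof (Rplus_Int_part_frac_part (v - u)). rewrite opp_IZR. lra.
Qed.

Lemma dS_arc_point_l u t v : S1 v -> 0 <= t <= dS u v ->
  dS (arc_point u t) v = dS u v - t.
Proof.
  intros Hv Ht. rewrite <- (arc_point_dS u v Hv) at 1.
  apply dS_arc_points; [lra | apply frac_part_bounds].
Qed.

Lemma dc_arc_point u t t' : dc (arc_point u t) (arc_point u t') <= Rabs (t' - t).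
Proof.
  unfold arc_point. eapply Rle_trans; [apply dc_frac_part|].
  now replace (u + t' - (u + t)) with (t' - t) by ring.
Qed.

Lemma increasing_continuous_right_end (f : R -> R) b c : continuity_pt f c ->
  (forall t1 t2, b < t1 < t2 -> t2 < c -> f t1 < f t2) ->
  forall t, b < t < c -> f t < f c.
Proof.
  intros Hc Hinc t Ht. set (t' := (t + c) / 2).
  assert (Htt' : f t < f t') by (apply Hinc; unfold t'; lra).
  assert (Ht'c : f t' <= f c); [|lra].
  apply Rnot_lt_le. intro Hlt.
  destruct (Hc (f t' - f c)) as [d [Hd Hnear]]; [lra|].
  set (s := c - Rmin d (c - t') / 2).
  assert (Hmin : 0 < Rmin d (c - t') <= d /\ Rmin d (c - t') <= c - t').
  { split; [split; [apply Rmin_pos; unfold t'; lra | apply Rmin_l] | apply Rmin_r]. }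
  assert (Hts : f t' < f s) by (apply Hinc; unfold s, t' in *; lra).
  assert (Hs : R_dist (f s) (f c) < f t' - f c).
  { apply Hnear. split; [split; [exact I | unfold s; lra]|]. simpl. unfold R_dist. rewrite Rabs_left; unfold s; lra. }
  unfold R_dist in Hs. rewrite Rabs_right in Hs; lra.
Qed.

Lemma increasing_inverse_continuity (f : R -> R) b c tr eps :
  (forall t1 t2, b <= t1 < t2 -> t2 <= c -> f t1 < f t2) -> b <= tr <= c -> 0 < eps ->
  exists del, 0 < del /\
    forall ts, b <= ts <= c -> Rabs (f ts - f tr) < del -> Rabs (ts - tr) < eps.
Proof.
  intros Hinc Htr Heps.
  assert (Hle : forall t1 t2, b <= t1 <= t2 -> t2 <= c -> f t1 <= f t2).
  { intros t1 t2 Ht Ht2. destruct (Req_dec t1 t2) as [->|]; [lra|]. left. apply Hinc; lra. }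
  assert (Hbelow : exists d, 0 < d /\ forall t, b <= t <= tr - eps / 2 -> f t <= f tr - d).
  { destruct (Rle_dec b (tr - eps / 2)).
    - exists (f tr - f (tr - eps / 2)). split.
      + assert (f (tr - eps / 2) < f tr) by (apply Hinc; lra). lra.
      + intros t Ht. assert (f t <= f (tr - eps / 2)) by (apply Hle; lra). lra.
    - exists 1. split; intros; lra. }
  assert (Habove : exists d, 0 < d /\ forall t, tr + eps / 2 <= t <= c -> f tr + d <= f t).
  { destruct (Rle_dec (tr + eps / 2) c).
    - exists (f (tr + eps / 2) - f tr). split.
      + assert (f tr < f (tr + eps / 2)) by (apply Hinc; lra). lra.
      + intros t Ht. assert (f (tr + eps / 2) <= f t) by (apply Hle; lra). lra.
    - exists 1. split; intros; lra. }
  destruct Hbelow as [d1 [Hd1 Hbelow]], Habove as [d2 [Hd2 Habove]].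
  exists (Rmin d1 d2). split; [now apply Rmin_pos|]. intros ts Hts Hf.
  pose proof (Rmin_l d1 d2). pose proof (Rmin_r d1 d2).
  apply Rabs_def2 in Hf. apply Rabs_def1.
  - destruct (Rle_dec (tr + eps / 2) ts); [|lra]. specialize (Habove ts). lra.
  - destruct (Rle_dec ts (tr - eps / 2)); [|lra]. specialize (Hbelow ts). lra.
Qed.

Section ArcParametrisation.

Variables (V : R -> Prop) (E : R -> R -> Prop) (dV : R -> R -> R) (u : R).
Hypothesis HV : forall x, V x <-> S1 x.
Hypothesis HEV : forall x y, E x y -> V x /\ V y.
Hypothesis Hcyc : cyclic V E.
Hypothesis HdV : metric_on V dV.
Hypothesis HdV_cont : forall x, V x -> forall eps, 0 < eps -> exists del, 0 < del /\
  forall y, V y -> dc x y < del -> dV x y < eps.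
Hypothesis Hpath : forall u0 u1 u2, E u0 u1 -> E u1 u2 -> dV u0 u1 < dV u0 u2.
Hypothesis Hu : V u.

Lemma V_arc_point t : V (arc_point u t).
Proof. apply HV, S1_arc_point. Qed.

Lemma arc_dist_continuous : continuity (fun t => dV u (arc_point u t)).
Proof.
  destruct HdV as [_ [_ [Hsym Htri]]].
  intro t. apply continuity_pt_intro. intros eps Heps.
  destruct (HdV_cont (arc_point u t) (V_arc_point t) eps Heps) as [del [Hdel Hnear]].
  exists del. split; [exact Hdel|]. intros y Hy.
  assert (Hty : dV (arc_point u t) (arc_point u y) < eps).
  { apply Hnear; [apply V_arc_point|]. eapply Rle_lt_trans; [apply dc_arc_point | exact Hy]. }
  pose proof (Htri u (arc_point u t) (arc_point u y) Hu (V_arc_point t) (V_arc_point y)).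
  pose proof (Htri u (arc_point u y) (arc_point u t) Hu (V_arc_point y) (V_arc_point t)).
  rewrite (Hsym (arc_point u y)) in * by apply V_arc_point.
  apply Rabs_def1; lra.
Qed.

Lemma arc_dist_0 : dV u (arc_point u 0) = 0.
Proof. rewrite arc_point_0 by now apply HV. now apply HdV. Qed.

Lemma arc_dist_pos t : 0 < t < 1 -> 0 < dV u (arc_point u t).
Proof.
  intros Ht. destruct HdV as [Hnn [Hzero _]].
  destruct (Hnn u (arc_point u t) Hu (V_arc_point t)) as [|Heq]; [assumption|].
  symmetry in Heq. apply (Hzero u (arc_point u t) Hu (V_arc_point t)) in Heq.
  assert (Hdist : dS u (arc_point u t) = t) by (apply dS_arc_point; [now apply HV | lra]).
  rewrite <- Heq in Hdist. unfold dS in Hdist. rewrite Rminus_diag, frac_part_id in Hdist; lra.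
Qed.

Lemma arc_dist_increasing_interior t1 t2 : 0 < t1 < t2 -> t2 < gamma E 1 u ->
  dV u (arc_point u t1) < dV u (arc_point u t2).
Proof.
  intros Ht Ht2. assert (Su : S1 u) by now apply HV.
  pose proof (gamma1_bounds E u).
  destruct (gamma1_approx E u t2) as [v [Huv Hv]]; [lra|].
  assert (Sv : S1 v) by apply HV, (HEV _ _ Huv).
  assert (Hv1 : dS u v < 1) by apply frac_part_bounds.
  destruct (Hcyc u v Huv (arc_point u t1) (V_arc_point t1)) as [Hu1 H1v].
  { unfold strictly_between. rewrite dS_arc_point by (assumption || lra). lra. }
  destruct (Hcyc _ _ H1v (arc_point u t2) (V_arc_point t2)) as [H12 _].
  { unfold strictly_between. rewrite dS_arc_points, dS_arc_point_l by (assumption || lra). lra. }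
  exact (Hpath _ _ _ Hu1 H12).
Qed.

Hypothesis Hgamma_lt1 : gamma E 1 u < 1.

Lemma arc_dist_increasing t1 t2 : 0 <= t1 < t2 -> t2 <= gamma E 1 u ->
  dV u (arc_point u t1) < dV u (arc_point u t2).
Proof.
  intros Ht Ht2. destruct (Req_dec t1 0) as [->|Ht1].
  { rewrite arc_dist_0. apply arc_dist_pos. lra. }
  destruct (Req_dec t2 (gamma E 1 u)) as [->|Ht2'].
  - apply (increasing_continuous_right_end (fun t => dV u (arc_point u t)) 0);
      [apply arc_dist_continuous | intros; apply arc_dist_increasing_interior | ]; lra.
  - apply arc_dist_increasing_interior; lra.
Qed.

Lemma g_on_arc r : 0 <= r <= gammaV E dV u ->
  exists t, 0 <= t <= gamma E 1 u /\ g V E dV r u = arc_point u t /\ dV u (arc_point u t) = r.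
Proof.
  intros Hr. assert (Su : S1 u) by now apply HV.
  change (gammaV E dV u) with (dV u (arc_point u (gamma E 1 u))) in Hr.
  pose proof (gamma1_bounds E u).
  assert (Hex : exists x, arcV V u (f1 E u) x /\ dV u x = r).
  { destruct (IVT_gen (fun t => dV u (arc_point u t)) 0 (gamma E 1 u) r arc_dist_continuous)
      as [t [Ht Hrt]].
    { rewrite arc_dist_0. rewrite Rmin_left, Rmax_right by lra. exact Hr. }
    rewrite Rmin_left, Rmax_right in Ht by lra.
    exists (arc_point u t). split; [split|]; [apply V_arc_point | | exact Hrt].
    unfold f1. fold (arc_point u (gamma E 1 u)). rewrite !dS_arc_point by (assumption || lra); lra. }
  destruct (epsilon_spec (inhabits 0) _ Hex) as [[Hx Harc] Hdx].
  fold (g V E dV r u) in Hx, Harc, Hdx.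
  unfold f1 in Harc. fold (arc_point u (gamma E 1 u)) in Harc.
  rewrite dS_arc_point in Harc by (assumption || lra).
  exists (dS u (g V E dV r u)). rewrite arc_point_dS by now apply HV.
  repeat split; [apply frac_part_bounds | assumption | assumption].
Qed.

Lemma g_continuous r : 0 <= r <= gammaV E dV u ->
  forall eps, 0 < eps -> exists del, 0 < del /\
    forall s, 0 <= s <= gammaV E dV u -> Rabs (s - r) < del ->
      dc (g V E dV r u) (g V E dV s u) < eps.
Proof.
  intros Hr eps Heps.
  destruct (g_on_arc r Hr) as [tr [Htr [-> <-]]].
  destruct (increasing_inverse_continuity (fun t => dV u (arc_point u t)) 0 (gamma E 1 u) tr eps)
    as [del [Hdel Hinv]]; [exact arc_dist_increasing | exact Htr | exact Heps |].
  exists del. split; [exact Hdel|]. intros s Hs Hsr.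
  destruct (g_on_arc s Hs) as [ts [Hts [-> <-]]].
  eapply Rle_lt_trans; [apply dc_arc_point | now apply Hinv].
Qed.

End ArcParametrisation.

Theorem lemma4p5 (V : R -> Prop) (E : R -> R -> Prop) (dV : R -> R -> R) (u : R) :
  digraph V E -> cyclic V E ->
  closed_in_S1 V -> continuous_graph E V -> metric_graph V E dV ->
  homeomorphic_to_S1 V -> V u ->
  forall r, 0 <= r <= gammaV E dV u ->
  forall eps, 0 < eps -> exists del, 0 < del /\
    forall s, 0 <= s <= gammaV E dV u -> Rabs (s - r) < del ->
      dc (g V E dV r u) (g V E dV s u) < eps.
Proof.
  intros [HVS [HEV _]] Hcyc _ _ [HdV [[HdV_cont _] Hpath]] Hhom Hu.
  pose proof (homeomorphic_to_S1_full V HVS Hhom) as HV.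
  destruct (proj2 (gamma1_bounds E u)) as [Hlt1 | Heq1].
  - exact (g_continuous V E dV u HV HEV Hcyc HdV HdV_cont Hpath Hu Hlt1).
  - assert (Hzero : gammaV E dV u = 0).
    { unfold gammaV, f1. rewrite Heq1. replace (u + 1) with (u + IZR 1) by reflexivity.
      rewrite frac_part_plus_IZR, frac_part_id by now apply HV. now apply HdV. }
    intros r Hr eps Heps. exists 1. split; [lra|]. intros s Hs _.
    replace s with r by lra. now rewrite dc_refl.
Qed.
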